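(* Let $\mathbf A\le\mathbf B$ be fields and let $\mathsf F$ be the class of all fields. Then $\mathsf d_{\mathsf F}(\mathbf A,\mathbf B)=B\cap\mathrm{Sg}^{\mathsf{acl}(\mathbf B)^+}(A)$; that is, it consists of the elements of $B$ lying in the least subfield of the algebraic closure of $\mathbf B$ that contains $A$ and, if $\mathbf B$ has prime characteristic $p$, is closed under $p$-th roots.
   Context: For a class $\mathsf K$ of rings and $\mathbf A\le\mathbf B\in\mathsf K$, the dominion $\mathsf d_{\mathsf K}(\mathbf A,\mathbf B)$ is the set of $b\in B$ with $g(b)=h(b)$ for all ring homomorphisms $g,h:\mathbf B\to\mathbf C$ with $\mathbf C\in\mathsf K$ and $g{\restriction}_A=h{\restriction}_A$. $\mathsf{acl}(\mathbf B)$ is the algebraic closure of $\mathbf B$. For an algebraically closed field $\mathbf D$, $\mathbf D^+$ is its expansion by the weak inverse ($a^*=a^{-1}$ if $a\ne0$, $0^*=0$) and, for each prime $p$, the weak $p$-root $r_p$ ($r_p(a)=\sqrt[p]{a}$ if the characteristic is $p$, else $0$). $\mathrm{Sg}^{\mathbf D^+}(X)$ is the subalgebra generated by $X$ in the language $\{+,\cdot,-,0,1,(\,)^*\}\cup\{r_p\}$. *)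

From HB Require Import structures.
From mathcomp Require Import all_boot all_order all_algebra.
Set Implicit Arguments. Unset Strict Implicit. Unset Printing Implicit Defensive.
Import GRing.Theory.
Local Open Scope ring_scope.

Definition dominion_F (B : fieldType) (A : {pred B}) : B -> Prop :=
  fun b => forall (C : fieldType) (g h : {rmorphism B -> C}),
    {in A, forall a, g a = h a} -> g b = h b.

(* Graph of the weak p-root r_p on a field D: r_p(a) is the p-th root of a if
   char D = p, and 0 otherwise. *)
Definition weak_proot (D : fieldType) (p : nat) (a b : D) : Prop :=
  if p \in [pchar D] then b ^+ p = a else b = 0.

(* S is a subuniverse of D^+ : closed under +, *, -, 0, 1, weak inverse
   (MathComp's x^-1, with 0^-1 = 0 in a field), and all weak p-roots. *)
Definition plus_closed (D : fieldType) (S : D -> Prop) : Prop :=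
  S 0 /\ S 1 /\
  (forall x y, S x -> S y -> S (x + y)) /\
  (forall x y, S x -> S y -> S (x * y)) /\
  (forall x, S x -> S (- x)) /\
  (forall x, S x -> S (x^-1)) /\
  (forall p, prime p -> forall a b, S a -> weak_proot p a b -> S b).

Definition Sg_plus (D : fieldType) (X : D -> Prop) : D -> Prop :=
  fun x => forall S : D -> Prop, plus_closed S -> (forall y, X y -> S y) -> S x.

Definition is_acl (B : fieldType) (L : closedFieldType) (iota : {rmorphism B -> L}) : Prop :=
  forall x : L, exists2 q : {poly B}, q != 0 & root (map_poly iota q) x.

From HB Require Import structures.
From mathcomp Require Import all_boot all_order all_algebra.
From mathcomp Require boolp classical_sets.
From mathcomp Require Import ring zify.
Set Implicit Arguments. Unset Strict Implicit. Unset Printing Implicit Defensive.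
Import GRing.Theory.
Local Open Scope ring_scope.

(* Let q be the characteristic exponent of B.  Both sides say that b is purely
   inseparable over A: b ^ (q ^ n) lies in A for some n.  As the Frobenius map is
   additive and injective, the elements of L purely inseparable over iota(A) form a
   subalgebra of L^+, and each of them is reached from iota(A) by iterated weak
   q-roots; this identifies Sg.  If b ^ (q ^ n) is in A, any two embeddings agreeing
   on A agree on b ^ (q ^ n), hence on b.  Otherwise b has a conjugate y <> iota b in
   L over A: iota b + 1 if b is transcendental, and else another root of its minimal
   polynomial m, because m = (X - b) ^ d would make b purely inseparable.  The
   embedding of A(b) sending b to y extends to B by Zorn's lemma, and together with
   iota it separates b. *)

Section SubFieldType.
Variables (F : fieldType) (S : divringClosed F).
Inductive subField := SubField x of x \in S.
Definition subField_val u := let: SubField x _ := u in x.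
Lemma subField_valP u : subField_val u \in S. Proof. by case: u. Qed.
HB.instance Definition _ := [isSub for subField_val].
HB.instance Definition _ := [Choice of subField by <:].
HB.instance Definition _ := [SubChoice_isSubComUnitRing of subField by <:].
HB.instance Definition _ := [SubComUnitRing_isSubIntegralDomain of subField by <:].
HB.instance Definition _ := [SubIntegralDomain_isSubField of subField by <:].
End SubFieldType.

Definition divringClosed_of (F : fieldType) (E : {pred F}) (E_subfield : divring_closed E) :
  divringClosed F :=
  HB.pack_for (divringClosed F) E (GRing.isDivringClosed.Build F E E_subfield).

(** * Purely inseparable elements *)

Definition char_exp (K : fieldType) : nat :=
  if boolp.pselect (exists p, p \in [pchar K]) is left charK then xchoose charK else 1%N.

Lemma char_expP (K : fieldType) :
  char_exp K \in [pchar K] \/ char_exp K = 1%N /\ forall p, p \notin [pchar K].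
Proof.
rewrite /char_exp; case: boolp.pselect => [charK|no_char]; first by left; exact: xchooseP.
by right; split=> // p; apply/negP => charKp; apply: no_char; exists p.
Qed.

Lemma char_exp_rmorph (K K' : fieldType) (f : {rmorphism K -> K'}) :
  char_exp K' = char_exp K.
Proof.
have eq_char := fmorph_pchar f.
case: (char_expP K) => [charK|[-> noK]]; case: (char_expP K') => [charK'|[-> noK']] //.
- by have := pcharf_eq charK' (char_exp K); rewrite eq_char charK inE => /esym/eqP.
- by move: charK; rewrite -eq_char (negbTE (noK' _)).
- by move: charK'; rewrite eq_char (negbTE (noK _)).
Qed.

Section CharExp.
Variable K : fieldType.
Local Notation q := (char_exp K).

Lemma char_exp_pnat n : [pchar K].-nat (q ^ n)%N.
Proof.
case: (char_expP K) => [charK|[-> _]]; last by rewrite exp1n.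
by rewrite pnatX (pnatE _ (pcharf_prime charK)) charK.
Qed.

Lemma exprD_char_exp n (x y : K) : (x + y) ^+ (q ^ n)%N = x ^+ (q ^ n)%N + y ^+ (q ^ n)%N.
Proof. exact: exprDn_pchar (char_exp_pnat n). Qed.

Lemma exprN_char_exp n (x : K) : (- x) ^+ (q ^ n)%N = - x ^+ (q ^ n)%N.
Proof. exact: exprNn_pchar (char_exp_pnat n). Qed.

Lemma expr_char_exp_inj n : injective (fun x : K => x ^+ (q ^ n)%N).
Proof.
move=> x y /= exy; apply/eqP; rewrite -subr_eq0.
have : (x - y) ^+ (q ^ n)%N == 0 by rewrite exprD_char_exp exprN_char_exp exy subrr.
by rewrite expf_eq0 => /andP[].
Qed.

Lemma weak_proot_char_exp p (a b : K) :
  prime p -> weak_proot p a b -> b = 0 \/ b ^+ q = a.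
Proof.
rewrite /weak_proot => _; case: ifP => [charKp|_]; last by left.
right; case: (char_expP K) => [charK|[_ noK]]; last by rewrite (negbTE (noK p)) in charKp.
by have := pcharf_eq charK p; rewrite charKp inE => /esym/eqP <-.
Qed.
End CharExp.

Definition purely_inseparable (K : fieldType) (A : {pred K}) (x : K) : Prop :=
  exists n, x ^+ (char_exp K ^ n)%N \in A.

Section PurelyInseparable.
Variables (K : fieldType) (A : divringClosed K).
Local Notation q := (char_exp K).

Lemma purely_inseparable_mem a : a \in A -> purely_inseparable A a.
Proof. by exists 0%N; rewrite expr1. Qed.

(* A common power [q ^ (n + m)] brings both operands into [A]. *)
Lemma purely_inseparable_op (op : K -> K -> K) :
  (forall n x y, op x y ^+ (q ^ n)%N = op (x ^+ (q ^ n)%N) (y ^+ (q ^ n)%N)) ->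
  (forall x y, x \in A -> y \in A -> op x y \in A) ->
  forall x y, purely_inseparable A x -> purely_inseparable A y ->
    purely_inseparable A (op x y).
Proof.
move=> op_expr opA x y [n xA] [m yA]; exists (n + m)%N.
rewrite op_expr expnD [in X in op _ X]mulnC !exprM.
by apply: opA; apply: rpredX.
Qed.

Lemma plus_closed_purely_inseparable : plus_closed (purely_inseparable A).
Proof.
split; first exact/purely_inseparable_mem/rpred0.
split; first exact/purely_inseparable_mem/rpred1.
split; first by apply: purely_inseparable_op => [n x y|]; [exact: exprD_char_exp | exact: rpredD].
split; first by apply: purely_inseparable_op => [n x y|]; [exact: exprMn | exact: rpredM].
split; first by move=> x [n xA]; exists n; rewrite exprN_char_exp rpredN.
split; first by move=> x [n xA]; exists n; rewrite exprVn rpredV.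
move=> p p_pr a b [n aA] /(weak_proot_char_exp p_pr) [->|ba].
  exact/purely_inseparable_mem/rpred0.
by exists n.+1; rewrite expnS exprM ba.
Qed.
End PurelyInseparable.

Lemma prod_XsubC_nseq (R : comNzRingType) d (b : R) :
  \prod_(z <- nseq d b) ('X - z%:P) = ('X - b%:P) ^+ d.
Proof. by rewrite big_nseq iter_mulr_1. Qed.

Lemma coef_XsubC_expn_pred (R : comNzRingType) d (b : R) : (0 < d)%N ->
  (('X - b%:P) ^+ d)`_d.-1 = - (b *+ d).
Proof.
move=> d_gt0; rewrite -prod_XsubC_nseq.
have := @coefPn_prod_XsubC R (nseq d b); rewrite size_nseq -lt0n d_gt0 => /(_ isT) ->.
by rewrite big_nseq iter_addr_0.
Qed.

Lemma monic_single_root (L : closedFieldType) (P : {poly L}) c :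
  P \is monic -> (forall z, root P z -> z = c) -> P = ('X - c%:P) ^+ (size P).-1.
Proof.
move=> P_monic P_root; have [r Pr] := closed_field_poly_normal P.
rewrite (monicP P_monic) scale1r in Pr.
have /all_pred1P r_c : all (pred1 c) r.
  by apply/allP => z zr; apply/eqP/P_root; rewrite Pr root_prod_XsubC.
by rewrite Pr size_prod_XsubC r_c prod_XsubC_nseq size_nseq.
Qed.

(* In characteristic [p] with [d = p * e], [(X - b)^d = (X - b^p)^e \Po X^p]:
   the coefficients of [(X - b^p)^e] are among those of [(X - b)^d]. *)
Lemma purely_inseparable_XsubC_expn (B : fieldType) (A : divringClosed B) d (b : B) :
  (0 < d)%N -> (forall i, (('X - b%:P) ^+ d)`_i \in A) -> purely_inseparable A b.
Proof.
elim: d {-2}d (leqnn d) b => [|D IH] d d_le b; first by move: d_le; rewrite leqn0 => /eqP ->.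
move=> d_gt0 coefA.
have [d_eq0|d_neq0] := eqVneq (d%:R : B) 0; last first.
  exists 0%N; rewrite expn0 expr1.
  have := coefA d.-1; rewrite coef_XsubC_expn_pred // rpredN => bdA.
  by rewrite -(mulfK d_neq0 b) mulr_natr rpred_div ?rpred_nat.
case: (char_expP B) => [charB|[_ noB]]; last first.
  have char0 : has_pchar0 B by move=> p; rewrite (negbTE (noB p)).
  by move/eqP: d_eq0 d_gt0; rewrite ((pcharf0P B).1 char0 d) => /eqP ->.
set p := char_exp B in charB *; have p_pr := pcharf_prime charB.
have /dvdnP [e de] : (p %| d)%N by rewrite (dvdn_pcharf charB) d_eq0.
have e_gt0 : (0 < e)%N by move: d_gt0; rewrite de muln_gt0 => /andP[].
have e_le : (e <= D)%N.
  have := prime_gt1 p_pr; move: d_le; rewrite de; nia.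
have charBp : p \in [pchar {poly B}] by rewrite (rmorph_pchar polyC).
have XsubC_p : ('X - b%:P) ^+ p = 'X^p - (b ^+ p)%:P.
  rewrite exprDn_pchar ?exprNn_pchar ?rmorphXn ?(pnatE _ p_pr) //.
have XsubC_d : ('X - b%:P) ^+ d = ('X - (b ^+ p)%:P) ^+ e \Po 'X^p.
  rewrite de mulnC exprM XsubC_p; elim: (e) => [|k IHk].
    by rewrite !expr0 comp_polyC.
  by rewrite !exprS comp_polyM -IHk comp_polyB comp_polyX comp_polyC.
have [|n bpA] := IH e e_le (b ^+ p) e_gt0.
  move=> i; have := coefA (i * p)%N.
  by rewrite XsubC_d coef_comp_poly_Xn ?prime_gt0 // dvdn_mull // mulnK ?prime_gt0.
by exists n.+1; rewrite expnS exprM.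
Qed.

Section RmorphImage.
Variables (F K : fieldType) (f : {rmorphism F -> K}) (A : {pred F}).

Definition rmorph_image : {pred K} :=
  fun z => boolp.asbool (exists2 a, a \in A & z = f a).

Lemma rmorph_imageP z : reflect (exists2 a, a \in A & z = f a) (z \in rmorph_image).
Proof. exact: boolp.asboolP. Qed.

Lemma rmorph_image_subfield : divring_closed A -> divring_closed rmorph_image.
Proof.
move=> A_subfield; pose AS := divringClosed_of A_subfield.
split; first by apply/rmorph_imageP; exists 1; rewrite ?rmorph1 // (@rpred1 _ AS).
  move=> _ _ /rmorph_imageP [a aA ->] /rmorph_imageP [c cA ->].
  by apply/rmorph_imageP; exists (a - c); rewrite ?rmorphB // (@rpredB _ AS).
move=> _ _ /rmorph_imageP [a aA ->] /rmorph_imageP [c cA ->].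
by apply/rmorph_imageP; exists (a / c); rewrite ?fmorph_div // (@rpred_div _ AS).
Qed.
End RmorphImage.

Lemma Sg_plus_char_exp_root (K : fieldType) (X : K -> Prop) n x :
  X (x ^+ (char_exp K ^ n)%N) -> Sg_plus X x.
Proof.
move=> Xx S S_closed XS; have := XS _ Xx.
case: S_closed => _ [_ [_ [_ [_ [_ S_root]]]]].
elim: n x {Xx} => [|n IH] x; first by rewrite expr1.
rewrite expnS exprM => /IH; case: (char_expP K) => [charK|[-> _]]; last by rewrite expr1.
by move/S_root; apply; [exact: pcharf_prime charK | rewrite /weak_proot charK].
Qed.

Section SgPlusImage.
Variables (B : fieldType) (A : {pred B}) (A_subfield : divring_closed A).
Variables (L : fieldType) (iota : {rmorphism B -> L}).
Local Notation X := (fun y : L => exists2 a, a \in A & y = iota a).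

Lemma Sg_plus_purely_inseparable b : Sg_plus X (iota b) -> purely_inseparable A b.
Proof.
pose AL := divringClosed_of (rmorph_image_subfield iota A_subfield).
move=> /(_ _ (plus_closed_purely_inseparable AL)) [y Xy|n].
  exact/purely_inseparable_mem/rmorph_imageP.
rewrite (char_exp_rmorph iota) -rmorphXn => /rmorph_imageP [a aA /fmorph_inj ba].
by exists n; rewrite ba.
Qed.

Lemma purely_inseparable_Sg_plus b : purely_inseparable A b -> Sg_plus X (iota b).
Proof.
move=> [n bA]; apply: (@Sg_plus_char_exp_root _ _ n).
by exists (b ^+ (char_exp B ^ n)%N); rewrite // (char_exp_rmorph iota) rmorphXn.
Qed.
End SgPlusImage.

Lemma purely_inseparable_dominion (B : fieldType) (A : {pred B}) b :
  purely_inseparable A b -> dominion_F A b.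
Proof.
move=> [n bA] C g h gh; apply: (@expr_char_exp_inj C n) => /=.
by rewrite (char_exp_rmorph g) -!rmorphXn gh.
Qed.

(** * Extending embeddings into an algebraically closed field *)

Record rmorph_on (B L : fieldType) (E : {pred B}) (f : B -> L) : Prop := RmorphOn {
  rmorph_on1 : f 1 = 1;
  rmorph_onB : {in E &, {morph f : x y / x - y}};
  rmorph_onM : {in E &, {morph f : x y / x * y}} }.

Lemma rmorph_on_rmorph (B L : fieldType) (E : {pred B}) (f : {rmorphism B -> L}) :
  rmorph_on E f.
Proof. by split=> [|x y _ _|x y _ _]; rewrite ?rmorph1 ?rmorphB ?rmorphM. Qed.

Section SubRmorph.
Variables (B L : fieldType) (E : divringClosed B) (f : B -> L) (f_morph : rmorph_on E f).

(* [f_morph] occurs in the body so that the instances below can be inferred. *)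
Definition sub_rmorph (u : subField E) : L := let _ := f_morph in f (val u).

Lemma sub_rmorph_is_zmod_morphism : zmod_morphism sub_rmorph.
Proof. by move=> u v; rewrite /sub_rmorph rmorphB /= (rmorph_onB f_morph) ?subField_valP. Qed.

Lemma sub_rmorph_is_monoid_morphism : monoid_morphism sub_rmorph.
Proof.
split=> [|u v]; first by rewrite /sub_rmorph rmorph1 (rmorph_on1 f_morph).
by rewrite /sub_rmorph rmorphM /= (rmorph_onM f_morph) ?subField_valP.
Qed.

HB.instance Definition _ :=
  GRing.isZmodMorphism.Build _ _ sub_rmorph sub_rmorph_is_zmod_morphism.
HB.instance Definition _ :=
  GRing.isMonoidMorphism.Build _ _ sub_rmorph sub_rmorph_is_monoid_morphism.
End SubRmorph.

Section TotalRmorph.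
Variables (B L : fieldType) (f : B -> L) (f_morph : rmorph_on predT f).

Definition total_rmorph (z : B) : L := let _ := f_morph in f z.

Lemma total_rmorph_is_zmod_morphism : zmod_morphism total_rmorph.
Proof. by move=> u v; rewrite /total_rmorph (rmorph_onB f_morph). Qed.

Lemma total_rmorph_is_monoid_morphism : monoid_morphism total_rmorph.
Proof. by split=> [|u v]; rewrite /total_rmorph ?(rmorph_on1 f_morph) ?(rmorph_onM f_morph). Qed.

HB.instance Definition _ :=
  GRing.isZmodMorphism.Build _ _ total_rmorph total_rmorph_is_zmod_morphism.
HB.instance Definition _ :=
  GRing.isMonoidMorphism.Build _ _ total_rmorph total_rmorph_is_monoid_morphism.
End TotalRmorph.

Section SubFieldIncl.
Variables (B : fieldType) (E E' : divringClosed B) (sEE' : {subset E <= E'}).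

Definition subField_incl (u : subField E) : subField E' := SubField (sEE' (subField_valP u)).

Lemma subField_incl_is_zmod_morphism : zmod_morphism subField_incl.
Proof. by move=> u v; apply: val_inj; rewrite rmorphB. Qed.

Lemma subField_incl_is_monoid_morphism : monoid_morphism subField_incl.
Proof. by split=> [|u v]; apply: val_inj; rewrite ?rmorph1 ?rmorphM. Qed.

HB.instance Definition _ :=
  GRing.isZmodMorphism.Build _ _ subField_incl subField_incl_is_zmod_morphism.
HB.instance Definition _ :=
  GRing.isMonoidMorphism.Build _ _ subField_incl subField_incl_is_monoid_morphism.
End SubFieldIncl.

Section AlgebraicOverImage.
Variables (B L : fieldType) (iota : {rmorphism B -> L}).

Definition alg_over (E : divringClosed B) (x : B) :=
  algebraicOver (val : subField E -> B) x.
Definition alg_over_iota (E : divringClosed B) (u : L) :=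
  algebraicOver (iota \o val : subField E -> L) u.

Lemma alg_over_iota_mem (E : divringClosed B) x : x \in E -> alg_over_iota E (iota x).
Proof. by move=> xE; have := algebraic_id (iota \o val) (SubField xE). Qed.

Lemma alg_over_iota_alg_over (E : divringClosed B) x :
  alg_over_iota E (iota x) -> alg_over E x.
Proof. by case=> p p_neq0; rewrite map_poly_comp fmorph_root; exists p. Qed.

Lemma alg_over_iota_subset (E E' : divringClosed B) :
  {subset E <= E'} -> forall u, alg_over_iota E u -> alg_over_iota E' u.
Proof.
move=> sEE' u [p p_neq0 pu]; exists (map_poly (subField_incl sEE') p).
  by rewrite map_poly_eq0.
by rewrite -map_poly_comp (@eq_map_poly _ _ _ (iota \o val)).
Qed.

Lemma alg_over_iota_root (E : divringClosed B) (P : {poly L}) u :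
  P != 0 -> root P u -> (forall i, alg_over_iota E P`_i) -> alg_over_iota E u.
Proof.
move=> P_neq0 Pu P_alg; apply/integral_algebraic; apply: integral_root P_neq0 Pu _.
by move=> z /(nthP 0) [i _ <-]; exact/integral_algebraic/P_alg.
Qed.

Lemma alg_over_iota_horner (E : divringClosed B) (P : {poly L}) u :
  (forall i, alg_over_iota E P`_i) -> alg_over_iota E u -> alg_over_iota E P.[u].
Proof.
move=> P_alg u_alg; apply/integral_algebraic.
apply: integral_horner; last exact/integral_algebraic.
by move=> z /(nthP 0) [i _ <-]; exact/integral_algebraic/P_alg.
Qed.
End AlgebraicOverImage.

Section Adjoin.
Variables (B L : fieldType) (E : divringClosed B) (f : B -> L) (f_morph : rmorph_on E f).
Variables (x : B) (y : L).
Local Notation SE := (subField E).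

Definition evalB (P : {poly SE}) : B := (map_poly val P).[x].
Definition evalL (P : {poly SE}) : L := (map_poly (sub_rmorph f_morph) P).[y].
HB.instance Definition _ := GRing.RMorphism.copy evalB (horner_eval x \o map_poly val).
HB.instance Definition _ :=
  GRing.RMorphism.copy evalL (horner_eval y \o map_poly (sub_rmorph f_morph)).

Lemma evalBC c : evalB c%:P = val c.
Proof. by rewrite /evalB (map_polyC val) hornerC. Qed.
Lemma evalBX : evalB 'X = x.
Proof. by rewrite /evalB (map_polyX val) hornerX. Qed.
Lemma evalLC c : evalL c%:P = f (val c).
Proof. by rewrite /evalL (map_polyC (sub_rmorph f_morph)) hornerC. Qed.
Lemma evalLX : evalL 'X = y.
Proof. by rewrite /evalL (map_polyX (sub_rmorph f_morph)) hornerX. Qed.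

Definition frac_repr (z : B) (PR : {poly SE} * {poly SE}) :=
  evalB PR.2 != 0 /\ z = evalB PR.1 / evalB PR.2.

Definition adjoin_pred : {pred B} := fun z => boolp.asbool (exists PR, frac_repr z PR).

Lemma adjoinP z : reflect (exists PR, frac_repr z PR) (z \in adjoin_pred).
Proof. exact: boolp.asboolP. Qed.

Lemma frac_reprC e (eE : e \in E) : frac_repr e ((SubField eE)%:P, 1).
Proof. by split; rewrite /= ?rmorph1 ?oner_neq0 ?divr1 // evalBC. Qed.

Lemma frac_reprX : frac_repr x ('X, 1).
Proof. by split; rewrite /= ?rmorph1 ?oner_neq0 ?divr1 // evalBX. Qed.

Lemma frac_reprB z1 z2 P1 R1 P2 R2 : frac_repr z1 (P1, R1) -> frac_repr z2 (P2, R2) ->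
  frac_repr (z1 - z2) (P1 * R2 - P2 * R1, R1 * R2).
Proof.
move=> [/= R1_neq0 ->] [/= R2_neq0 ->]; rewrite /frac_repr /= !rmorphB !rmorphM.
split; [exact: mulf_neq0 | by field; rewrite R1_neq0 R2_neq0].
Qed.

Lemma frac_reprM z1 z2 P1 R1 P2 R2 : frac_repr z1 (P1, R1) -> frac_repr z2 (P2, R2) ->
  frac_repr (z1 * z2) (P1 * P2, R1 * R2).
Proof.
move=> [/= R1_neq0 ->] [/= R2_neq0 ->]; rewrite /frac_repr /= !rmorphM.
split; [exact: mulf_neq0 | by field; rewrite R1_neq0 R2_neq0].
Qed.

Lemma frac_reprV z1 z2 P1 R1 P2 R2 : frac_repr z1 (P1, R1) -> frac_repr z2 (P2, R2) ->
  z2 != 0 -> frac_repr (z1 / z2) (P1 * R2, R1 * P2).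
Proof.
move=> [/= R1_neq0 ->] [/= R2_neq0 ->] z2_neq0; rewrite /frac_repr /= !rmorphM.
have P2_neq0 : evalB P2 != 0 by apply: contraNneq z2_neq0 => ->; rewrite mul0r.
split; [exact: mulf_neq0 | by field; rewrite R1_neq0 R2_neq0 P2_neq0].
Qed.

Lemma adjoin_subfield : divring_closed adjoin_pred.
Proof.
split; first by apply/adjoinP; exists (1, 1); split; rewrite /= rmorph1 ?oner_neq0 ?divr1.
  move=> z1 z2 /adjoinP [[P1 R1] z1P] /adjoinP [[P2 R2] z2P].
  by apply/adjoinP; eexists; exact: frac_reprB z1P z2P.
move=> z1 z2 /adjoinP [[P1 R1] z1P] /adjoinP [[P2 R2] z2P]; apply/adjoinP.
have [->|z2_neq0] := eqVneq z2 0.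
  rewrite invr0 mulr0; exists (0, 1).
  by split; rewrite /= rmorph1 ?oner_neq0 // rmorph0 mul0r.
by eexists; exact: frac_reprV z1P z2P z2_neq0.
Qed.

Definition adjoin := divringClosed_of adjoin_subfield.

Lemma sub_adjoin : {subset E <= adjoin}.
Proof. by move=> e eE; apply/adjoinP; eexists; exact: frac_reprC. Qed.

Lemma mem_adjoin : x \in adjoin.
Proof. by apply/adjoinP; eexists; exact: frac_reprX. Qed.

(* [P(x) / R(x)] goes to [P^f(y) / R^f(y)]; under [evalBL_eq0] below this does not
   depend on the chosen representation. *)
Definition adjoin_ext (z : B) : L :=
  if boolp.pselect (exists PR, frac_repr z PR) is left z_repr then
    let PR := sval (boolp.cid z_repr) in evalL PR.1 / evalL PR.2
  else f z.

Hypothesis evalBL_eq0 : forall P, (evalB P == 0) = (evalL P == 0).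

Lemma evalL_neq0 P : evalB P != 0 -> evalL P != 0. Proof. by rewrite evalBL_eq0. Qed.

Lemma adjoin_extE z P R : frac_repr z (P, R) -> adjoin_ext z = evalL P / evalL R.
Proof.
move=> zPR; rewrite /adjoin_ext; case: boolp.pselect => [z_repr|]; last first.
  by case; exists (P, R).
case: (boolp.cid z_repr) => [[P' R']] [/= R'_neq0 zPR'] /=.
case: zPR => [/= R_neq0 zPR]; apply/eqP.
rewrite eqr_div ?evalL_neq0 // -subr_eq0 -!rmorphM -rmorphB -evalBL_eq0.
by rewrite rmorphB !rmorphM subr_eq0 -eqr_div // -zPR -zPR'.
Qed.

Lemma rmorph_on_adjoin_ext : rmorph_on adjoin adjoin_ext.
Proof.
split.
- by rewrite (adjoin_extE (frac_reprC (rpred1 E))) rmorph1 divr1 evalLC (rmorph_on1 f_morph).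
- move=> z1 z2 /adjoinP [[P1 R1] z1P] /adjoinP [[P2 R2] z2P].
  rewrite (adjoin_extE (frac_reprB z1P z2P)) (adjoin_extE z1P) (adjoin_extE z2P).
  rewrite rmorphB !rmorphM; field.
  by rewrite (evalL_neq0 z1P.1) (evalL_neq0 z2P.1).
- move=> z1 z2 /adjoinP [[P1 R1] z1P] /adjoinP [[P2 R2] z2P].
  rewrite (adjoin_extE (frac_reprM z1P z2P)) (adjoin_extE z1P) (adjoin_extE z2P).
  rewrite !rmorphM; field.
  by rewrite (evalL_neq0 z1P.1) (evalL_neq0 z2P.1).
Qed.

Lemma adjoin_ext_sub e : e \in E -> adjoin_ext e = f e.
Proof. by move=> eE; rewrite (adjoin_extE (frac_reprC eE)) rmorph1 divr1 evalLC. Qed.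

Lemma adjoin_ext_gen : adjoin_ext x = y.
Proof. by rewrite (adjoin_extE frac_reprX) rmorph1 divr1 evalLX. Qed.

Lemma alg_over_iota_adjoin_ext (iota : {rmorphism B -> L}) :
  (forall e, e \in E -> alg_over_iota iota E (f e)) -> alg_over_iota iota adjoin y ->
  forall z, z \in adjoin -> alg_over_iota iota adjoin (adjoin_ext z).
Proof.
move=> f_alg y_alg z /adjoinP [[P R] zPR]; rewrite (adjoin_extE zPR).
have evalL_alg Q : alg_over_iota iota adjoin (evalL Q).
  apply: alg_over_iota_horner => // i; rewrite coef_map /=.
  exact/(alg_over_iota_subset sub_adjoin)/f_alg/subField_valP.
exact: algebraic_div (evalL_alg P) (evalL_alg R).
Qed.
End Adjoin.

Section Conjugates.
Variables (B : fieldType) (L : closedFieldType) (iota : {rmorphism B -> L}).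
Variables (E : divringClosed B) (f : B -> L) (f_morph : rmorph_on E f).
Hypothesis f_alg : forall e, e \in E -> alg_over_iota iota E (f e).
Local Notation SE := (subField E).
Local Notation fE := (sub_rmorph f_morph).

Definition minpoly_spec (x : B) (m : {poly SE}) :=
  [/\ m \is monic, evalB x m == 0 &
      forall p : {poly SE}, p != 0 -> evalB x p == 0 -> (size m <= size p)%N].

Lemma exists_minpoly x : alg_over E x -> exists m, minpoly_spec x m.
Proof.
case=> p0 p0_neq0 p0x.
pose annihilated n := boolp.asbool (exists p : {poly SE}, [/\ p != 0, evalB x p == 0 & size p = n]).
have [|n /boolp.asboolP [m [m_neq0 mx <-]] m_min] := ex_minnP (P := annihilated).
  by exists (size p0); apply/boolp.asboolP; exists p0.
have lc_neq0 : lead_coef m != 0 by rewrite lead_coef_eq0.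
exists ((lead_coef m)^-1 *: m); split.
- by rewrite monicE lead_coefZ mulVf.
- by rewrite -mul_polyC rmorphM mulf_eq0 mx orbT.
- move=> p p_neq0 px; rewrite size_scale ?invr_eq0 //.
  by apply: m_min; apply/boolp.asboolP; exists p.
Qed.

Lemma minpoly_dvdp x m P : minpoly_spec x m -> evalB x P == 0 -> m %| P.
Proof.
case=> m_monic mx m_min Px; apply/modp_eq0P/eqP; apply: contraT => Pm_neq0.
have : evalB x (P %% m) == 0.
  move: Px; rewrite {1}(divp_eq P m) rmorphD rmorphM /=.
  by move: mx => /eqP ->; rewrite mulr0 add0r.
by move/(m_min _ Pm_neq0); rewrite leqNgt ltn_modp monic_neq0.
Qed.

Lemma minpoly_coprimep x m P : minpoly_spec x m -> evalB x P != 0 -> coprimep m P.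
Proof.
case=> m_monic mx m_min Px; have m_neq0 := monic_neq0 m_monic.
have g_m := dvdp_gcdl m P; have g_P := dvdp_gcdr m P.
have g_neq0 : gcdp m P != 0 by rewrite gcdp_eq0 negb_and m_neq0.
have gx : evalB x (gcdp m P) != 0.
  by apply: contra Px => gx; rewrite -(divpK g_P) rmorphM /= (eqP gx) mulr0.
have mg_neq0 : m %/ gcdp m P != 0.
  by apply: contra m_neq0 => /eqP mg0; rewrite -(divpK g_m) mg0 mul0r.
have : evalB x (m %/ gcdp m P) == 0.
  by move: mx; rewrite -{1}(divpK g_m) rmorphM /= mulf_eq0 (negbTE gx) orbF.
move/(m_min _ mg_neq0); rewrite size_divp // /coprimep.
have := size_poly_gt0 m; have := size_poly_gt0 (gcdp m P).
rewrite m_neq0 g_neq0 => g_gt0 m_gt0 m_le.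
move: m_le; rewrite leqNgt ltn_subrL m_gt0 andbT lt0n negbK => /eqP g1.
by rewrite -(prednK g_gt0) g1.
Qed.

Lemma evalBL_eq0_minpoly_root x m y : minpoly_spec x m -> root (map_poly fE m) y ->
  forall P, (evalB x P == 0) = (evalL f_morph y P == 0).
Proof.
move=> m_min my P; apply/idP/idP => [Px|].
  have my' : evalL f_morph y m = 0 by exact/eqP.
  by rewrite -(divpK (minpoly_dvdp m_min Px)) rmorphM /= my' mulr0.
apply: contraTT => Px.
have m_P : coprimep (map_poly fE m) (map_poly fE P).
  by rewrite coprimep_map; exact: minpoly_coprimep m_min Px.
exact: coprimep_root m_P my.
Qed.

Lemma minpoly_size_gt1 x m : minpoly_spec x m -> (1 < size m)%N.
Proof.
case=> m_monic mx _; rewrite ltn_neqAle eq_sym size_poly_gt0 monic_neq0 // andbT.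
apply/negP => /size_poly1P [c _ mc].
by move: m_monic mx; rewrite mc monicE lead_coefC => /eqP ->; rewrite rmorph1 oner_eq0.
Qed.

Lemma minpoly_has_root x m : minpoly_spec x m -> exists y, root (map_poly fE m) y.
Proof.
by move/minpoly_size_gt1 => m_gt1; apply/closed_rootP; rewrite size_map_poly gtn_eqF.
Qed.

Lemma alg_over_iota_root_map (p : {poly SE}) y :
  p != 0 -> root (map_poly fE p) y -> alg_over_iota iota E y.
Proof.
move=> p_neq0 py; apply: alg_over_iota_root py _; first by rewrite map_poly_eq0.
by move=> i; rewrite coef_map; apply/f_alg/subField_valP.
Qed.

(* [iota x] stays transcendental over [f(E)] because [f(E)] is algebraic over [iota(E)]. *)
Lemma evalBL_eq0_transcendental x e : e \in E -> ~ alg_over E x ->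
  forall P, (evalB x P == 0) = (evalL f_morph (iota (x + e)) P == 0).
Proof.
move=> eE x_tr P; have [->|P_neq0] := eqVneq P 0; first by rewrite !rmorph0 !eqxx.
have -> : (evalB x P == 0) = false by apply/negP => Px; apply: x_tr; exists P.
apply/esym/negP => /(alg_over_iota_root_map P_neq0)/alg_over_iota_alg_over xe_alg.
apply: x_tr; rewrite -(addrK e x) -[e]/(val (SubField eE)).
exact/algebraic_sub/algebraic_id.
Qed.
End Conjugates.

Section PartialRmorphisms.
Variables (B : fieldType) (L : closedFieldType) (iota : {rmorphism B -> L}).

Record partial_rmorph := PartialRmorph { pdom : B -> bool; pfun : B -> L }.

(* The invariant that images are algebraic over [iota] of the domain is what makes
   [evalBL_eq0_transcendental] available at every extension step. *)
Definition admissible (e : partial_rmorph) :=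
  exists dom_subfield : divring_closed (pdom e),
    rmorph_on (pdom e) (pfun e) /\
    forall z, z \in pdom e -> alg_over_iota iota (divringClosed_of dom_subfield) (pfun e z).

Definition prmorph_le (e1 e2 : partial_rmorph) :=
  {subset pdom e1 <= pdom e2} /\ {in pdom e1, pfun e1 =1 pfun e2}.

Lemma prmorph_le_refl e : prmorph_le e e. Proof. by split. Qed.

Lemma prmorph_le_trans e1 e2 e3 : prmorph_le e1 e2 -> prmorph_le e2 e3 -> prmorph_le e1 e3.
Proof.
move=> [s12 f12] [s23 f23]; split=> [z /s12 /s23 //|z z1].
by rewrite f12 // f23 // s12.
Qed.

Section AdjoinExtension.
Variables (E : divringClosed B) (f : B -> L) (f_morph : rmorph_on E f) (x : B) (y : L).
Hypothesis f_alg : forall e, e \in E -> alg_over_iota iota E (f e).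
Hypothesis evalBL_eq0 : forall P, (evalB x P == 0) = (evalL f_morph y P == 0).
Hypothesis y_alg : alg_over_iota iota (adjoin E x) y.

Definition adjoin_prmorph := PartialRmorph (adjoin_pred E x) (adjoin_ext f_morph x y).

Lemma admissible_adjoin : admissible adjoin_prmorph.
Proof.
exists (adjoin_subfield E x); split; first exact: rmorph_on_adjoin_ext.
exact: alg_over_iota_adjoin_ext.
Qed.

Lemma prmorph_le_adjoin : prmorph_le (PartialRmorph (fun z => z \in E) f) adjoin_prmorph.
Proof. by split=> [|e eE]; [exact: sub_adjoin | rewrite /= adjoin_ext_sub]. Qed.
End AdjoinExtension.

Lemma admissible_extend e x : admissible e ->
  exists e', [/\ admissible e', prmorph_le e e' & x \in pdom e'].
Proof.
case: e => D F [dom_subfield [dom_morph dom_alg]] /=; set E := divringClosed_of dom_subfield.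
have f_morph : rmorph_on E F := dom_morph.
have f_alg : forall z, z \in E -> alg_over_iota iota E (F z) := dom_alg.
have extend y : (forall P, (evalB x P == 0) = (evalL f_morph y P == 0)) ->
    alg_over_iota iota (adjoin E x) y ->
    exists e', [/\ admissible e', prmorph_le (PartialRmorph D F) e' & x \in pdom e'].
  move=> evalBL_eq0 y_alg; exists (adjoin_prmorph f_morph x y); split.
  - exact: admissible_adjoin.
  - exact: prmorph_le_adjoin evalBL_eq0.
  - exact: mem_adjoin.
have [x_alg|x_tr] := boolp.pselect (alg_over E x); last first.
  apply: (extend (iota (x + 0))); first exact: evalBL_eq0_transcendental (rpred0 _) x_tr.
  by apply: alg_over_iota_mem; rewrite addr0 mem_adjoin.
have [m m_min] := exists_minpoly x_alg; have [y my] := minpoly_has_root f_morph m_min.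
apply: (extend y); first exact: evalBL_eq0_minpoly_root m_min my.
apply/(alg_over_iota_subset (@sub_adjoin _ _ x))/(alg_over_iota_root_map f_alg _ my).
by case: m_min => /monic_neq0.
Qed.

Section ChainUnion.
Variables (S : partial_rmorph -> Prop) (e0 : partial_rmorph) (S_e0 : S e0).
Hypothesis S_admissible : forall e, S e -> admissible e.
Hypothesis S_chain : forall e1 e2, S e1 -> S e2 -> prmorph_le e1 e2 \/ prmorph_le e2 e1.

Definition chain_dom : {pred B} := fun z => boolp.asbool (exists2 e, S e & z \in pdom e).

Lemma chain_domP z : reflect (exists2 e, S e & z \in pdom e) (z \in chain_dom).
Proof. exact: boolp.asboolP. Qed.

Definition chain_fun (z : B) : L :=
  if boolp.pselect (exists2 e, S e & z \in pdom e) is left z_dom then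
    pfun (s2val (boolp.cid2 z_dom)) z
  else 0.

Lemma chain_funE e z : S e -> z \in pdom e -> chain_fun z = pfun e z.
Proof.
move=> Se ze; rewrite /chain_fun; case: boolp.pselect => [z_dom|]; last by case; exists e.
case: (boolp.cid2 z_dom) => e' Se' ze' /=.
by case: (S_chain Se Se') => [[_ ee']|[_ e'e]]; rewrite ?ee' ?e'e.
Qed.

Lemma chain_common_dom z1 z2 : z1 \in chain_dom -> z2 \in chain_dom ->
  exists e, [/\ S e, z1 \in pdom e & z2 \in pdom e].
Proof.
move=> /chain_domP [e1 Se1 z1e1] /chain_domP [e2 Se2 z2e2].
by case: (S_chain Se1 Se2) => [[sub _]|[sub _]]; [exists e2; rewrite z2e2 sub | exists e1; rewrite z1e1 sub].
Qed.

Definition chain_union := PartialRmorph chain_dom chain_fun.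

Lemma prmorph_le_chain_union e : S e -> prmorph_le e chain_union.
Proof.
move=> Se; split=> [z ze|z ze /=]; last by rewrite (chain_funE Se ze).
by apply/chain_domP; exists e.
Qed.

Lemma chain_member_subfield e : S e -> divring_closed (pdom e).
Proof. by case/S_admissible. Qed.

Lemma chain_dom_subfield : divring_closed chain_dom.
Proof.
split; first by apply/chain_domP; exists e0; rewrite // (@rpred1 _ (divringClosed_of (chain_member_subfield S_e0))).
  move=> z1 z2 /chain_common_dom/[apply] [[e [Se z1e z2e]]].
  by apply/chain_domP; exists e; rewrite // (@rpredB _ (divringClosed_of (chain_member_subfield Se))).
move=> z1 z2 /chain_common_dom/[apply] [[e [Se z1e z2e]]].
by apply/chain_domP; exists e; rewrite // (@rpred_div _ (divringClosed_of (chain_member_subfield Se))).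
Qed.

Lemma admissible_chain_union : admissible chain_union.
Proof.
exists chain_dom_subfield; split; [split|] => /=.
- have [dom_subfield [[f1 _ _] _]] := S_admissible S_e0.
  by rewrite (chain_funE S_e0) // (@rpred1 _ (divringClosed_of dom_subfield)).
- move=> z1 z2 /chain_common_dom/[apply] [[e [Se z1e z2e]]].
  have [dom_subfield [[_ fB _] _]] := S_admissible Se.
  rewrite !(chain_funE Se) ?fB //.
  by rewrite (@rpredB _ (divringClosed_of dom_subfield)).
- move=> z1 z2 /chain_common_dom/[apply] [[e [Se z1e z2e]]].
  have [dom_subfield [[_ _ fM] _]] := S_admissible Se.
  rewrite !(chain_funE Se) ?fM //.
  by rewrite (@rpredM _ (divringClosed_of dom_subfield)).
- move=> z /chain_domP [e Se ze]; rewrite (chain_funE Se ze).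
  have [dom_subfield [_ f_alg]] := S_admissible Se.
  apply: (alg_over_iota_subset (E := divringClosed_of dom_subfield)) (f_alg _ ze).
  by move=> u ue; apply/chain_domP; exists e.
Qed.
End ChainUnion.

Lemma exists_maximal_admissible e0 : admissible e0 ->
  exists e, [/\ admissible e, prmorph_le e0 e &
    forall e', admissible e' -> prmorph_le e e' -> prmorph_le e' e].
Proof.
move=> e0_adm; pose T := {e | admissible e /\ prmorph_le e0 e}.
pose R (s t : T) := boolp.asbool (prmorph_le (sval s) (sval t)).
have t0 : T := exist _ e0 (conj e0_adm (prmorph_le_refl e0)).
have [t t_max] : exists t, forall s, R t s -> R s t.
  refine (@classical_sets.ZL_preorder T t0 R _ _ _).
  - by move=> s; apply/boolp.asboolP; exact: prmorph_le_refl.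
  - move=> r s u /boolp.asboolP rs /boolp.asboolP su; apply/boolp.asboolP.
    exact: prmorph_le_trans rs su.
  move=> C C_chain; pose S e := (exists2 s, C s & sval s = e) \/ e = e0.
  have S_e0 : S e0 by right.
  have S_adm e : S e -> admissible e by case=> [[s _ <-]|->] //; case: (svalP s).
  have S_chain e1 e2 : S e1 -> S e2 -> prmorph_le e1 e2 \/ prmorph_le e2 e1.
    case=> [[s1 Cs1 <-]|->] [[s2 Cs2 <-]|->].
    - by case: (C_chain _ _ Cs1 Cs2) => /boolp.asboolP; [left|right].
    - by right; case: (svalP s1).
    - by left; case: (svalP s2).
    - by left; exact: prmorph_le_refl.
  have u_adm := admissible_chain_union S_e0 S_adm S_chain.
  have e0_u := prmorph_le_chain_union S_chain S_e0.
  exists (exist _ (chain_union S) (conj u_adm e0_u) : T) => s Cs; apply/boolp.asboolP => /=.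
  have S_s : S (sval s) by left; exists s.
  exact (prmorph_le_chain_union S_chain S_s).
case: t t_max => e [e_adm e0_e] /= t_max; exists e; split=> // e' e'_adm e_e'.
pose t' : T := exist _ e' (conj e'_adm (prmorph_le_trans e0_e e_e')).
by apply/boolp.asboolP/(t_max t'); apply/boolp.asboolP.
Qed.

Lemma exists_rmorph_extension e0 : admissible e0 ->
  exists h : {rmorphism B -> L}, {in pdom e0, h =1 pfun e0}.
Proof.
case/exists_maximal_admissible => e [e_adm [_ e0_e] e_max].
have e_total x : x \in pdom e.
  have [e' [e'_adm e_e' xe']] := admissible_extend x e_adm.
  by case: (e_max _ e'_adm e_e') => /(_ x xe').
case: e_adm => _ [[f1 fB fM] _].
have f_morph : rmorph_on predT (pfun e).
  by split=> // u v _ _; [apply: fB | apply: fM]; apply: e_total.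
by exists (total_rmorph f_morph) => z z0; rewrite /= /total_rmorph e0_e.
Qed.
End PartialRmorphisms.

(** * Dominions *)

Section Dominion.
Variables (B : fieldType) (A : divringClosed B) (L : closedFieldType).
Variable iota : {rmorphism B -> L}.
Let iota_morph := rmorph_on_rmorph A iota.
Let iota_alg e : e \in A -> alg_over_iota iota A (iota e) := @alg_over_iota_mem _ _ iota A e.

Lemma exists_other_conjugate b : ~ purely_inseparable A b ->
  exists y, [/\ forall P, (evalB b P == 0) = (evalL iota_morph y P == 0),
    alg_over_iota iota (adjoin A b) y & y != iota b].
Proof.
move=> b_insep; have [b_alg|b_tr] := boolp.pselect (alg_over A b); last first.
  exists (iota (b + 1)); split.
  - exact: evalBL_eq0_transcendental (rpred1 _) b_tr.
  - by apply: alg_over_iota_mem; rewrite rpredD ?mem_adjoin ?sub_adjoin ?rpred1.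
  - by rewrite (inj_eq (fmorph_inj iota)) -subr_eq0 addrC addKr oner_eq0.
have [m m_min] := exists_minpoly b_alg; have [m_monic mb _] := m_min.
suff [y my y_neq] : exists2 y, root (map_poly (sub_rmorph iota_morph) m) y & y != iota b.
  exists y; split=> //; first exact: evalBL_eq0_minpoly_root m_min my.
  apply/(alg_over_iota_subset (@sub_adjoin _ _ b))/(alg_over_iota_root_map iota_alg _ my).
  exact: monic_neq0.
apply: boolp.contrapT => no_other; apply: b_insep.
have single_root z : root (map_poly (sub_rmorph iota_morph) m) z -> z = iota b.
  by move=> mz; apply: boolp.contrapT => z_neq; apply: no_other; exists z => //; apply/eqP.
have map_m_monic : map_poly (sub_rmorph iota_morph) m \is monic by rewrite map_monic.
have := monic_single_root map_m_monic single_root.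
have -> : map_poly (sub_rmorph iota_morph) m = map_poly iota (map_poly val m).
  by rewrite -map_poly_comp; apply: eq_map_poly.
rewrite !size_map_poly -map_polyXsubC -rmorphXn => /map_poly_inj m_eq.
apply: (@purely_inseparable_XsubC_expn _ _ (size m).-1).
  by rewrite -subn1 subn_gt0 (minpoly_size_gt1 m_min).
by move=> i; rewrite -m_eq coef_map /= subField_valP.
Qed.

Lemma dominion_purely_inseparable b : dominion_F A b -> purely_inseparable A b.
Proof.
move=> b_dom; apply: boolp.contrapT => /exists_other_conjugate [y [evalBL_eq0 y_alg y_neq]].
have [h hE] := exists_rmorph_extension (admissible_adjoin iota_alg evalBL_eq0 y_alg).
have iota_h : {in A, forall a, iota a = h a}.
  by move=> a aA; rewrite hE /= ?adjoin_ext_sub // sub_adjoin.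
move: y_neq; rewrite (b_dom L iota h iota_h) hE /= ?adjoin_ext_gen ?eqxx //.
exact: mem_adjoin.
Qed.
End Dominion.

Theorem mainTheorem9 (B : fieldType) (A : {pred B}) (A_subfield : divring_closed A)
    (L : closedFieldType) (iota : {rmorphism B -> L}) (iota_acl : is_acl iota) :
  forall b : B,
    dominion_F A b <-> Sg_plus (fun y : L => exists2 a, a \in A & y = iota a) (iota b).
Proof.
move=> b; pose AS := divringClosed_of A_subfield; split.
  move=> /(@dominion_purely_inseparable _ AS _ iota).
  exact: purely_inseparable_Sg_plus.
move=> /(Sg_plus_purely_inseparable A_subfield).
exact: purely_inseparable_dominion.
Qed.
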